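(* Let $A$ be a group with a free subgroup $F\leqslant A$, and let $g\in A\setminus\{1\}$ be an element of finite order. Suppose that every finite index subgroup of $F$ is separable in $A$. Then there exists a finite index normal subgroup $N\lhd A$ such that $\psi(g)\notin \psi(F)^{A/N}$, where $\psi:A\to A/N$ is the natural epimorphism.
   Context: A subset of a group $A$ is separable if it is closed in the profinite topology of $A$. For subsets $C,D$ of a group, $C^D=\{dcd^{-1}\mid c\in C,d\in D\}$. *)

From Stdlib Require Import List.
Import ListNotations.

Record group := Group {
  carrier :> Type;
  gmul : carrier -> carrier -> carrier;
  gone : carrier;
  ginv : carrier -> carrier;
  gmulA : forall x y z, gmul x (gmul y z) = gmul (gmul x y) z;
  gmul1 : forall x, gmul gone x = x;
  gmulV : forall x, gmul (ginv x) x = gone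
}.

Arguments gmul {A} : rename.
Arguments gone {A} : rename.
Arguments ginv {A} : rename.

Section Defs.
Variable A : group.

Definition is_subgroup (H : A -> Prop) : Prop :=
  H gone /\ (forall x y, H x -> H y -> H (gmul x y)) /\
  (forall x, H x -> H (ginv x)).

Definition is_normal_subgroup (N : A -> Prop) : Prop :=
  is_subgroup N /\ forall a n, N n -> N (gmul (gmul a n) (ginv a)).

Definition finite_index_in (K H : A -> Prop) : Prop :=
  exists l : list A, forall x, K x ->
    exists t, In t l /\ K t /\ H (gmul (ginv t) x).

Definition finite_index (H : A -> Prop) : Prop :=
  finite_index_in (fun _ => True) H.

Definition profinite_open (U : A -> Prop) : Prop :=
  forall x, U x -> exists N, is_normal_subgroup N /\ finite_index N /\
    forall n, N n -> U (gmul x n).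

Definition profinite_closed (S : A -> Prop) : Prop :=
  profinite_open (fun x => ~ S x).

Definition separable (S : A -> Prop) : Prop := profinite_closed S.

Fixpoint gpow (x : A) (n : nat) : A :=
  match n with 0 => gone | S k => gmul x (gpow x k) end.

Definition finite_order (g : A) : Prop :=
  exists n, 0 < n /\ gpow g n = gone.

(* Words in X^{+-1}: a letter (b, x) stands for x if b = true, x^-1 otherwise. *)
Fixpoint eval_word (w : list (bool * A)) : A :=
  match w with
  | [] => gone
  | (b, x) :: w' => gmul (if b then x else ginv x) (eval_word w')
  end.

Definition word_over (X : A -> Prop) (w : list (bool * A)) : Prop :=
  Forall (fun p => X (snd p)) w.

Fixpoint reduced (w : list (bool * A)) : Prop :=
  match w with
  | [] => True
  | (b, x) :: w' =>
      match w' with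
      | [] => True
      | (b', x') :: _ => ~ (x = x' /\ b <> b')
      end /\ reduced w'
  end.

Definition freely_generated (F X : A -> Prop) : Prop :=
  (forall f, F f <-> exists w, word_over X w /\ eval_word w = f) /\
  (forall w, word_over X w -> reduced w -> w <> [] -> eval_word w <> gone).

Definition is_free_subgroup (F : A -> Prop) : Prop :=
  is_subgroup F /\ exists X, freely_generated F X.

End Defs.

(* Free groups are torsion free, so [g] is not in [F], and separability of [F]
   gives a finite index normal subgroup [N1] with [g] not in [N1]; let
   [M := F ∩ N1]. If [g] is congruent to [a f a^-1] modulo some [N ⊆ N1], then
   [f^n ∈ N] for the order [n] of [g], while [f ∉ M]. It therefore suffices, for
   each of the finitely many classes [t M] of [F/M] with [t ∉ M] and [t^n ∈ M],
   to find a finite index subgroup [L] of [F] containing no [n]-th power of an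
   element of [t M]: by separability [L] contains [F ∩ N_t] for a finite index
   normal [N_t], and [N1 ∩ ⋂ N_t] works. If [d] is the order of [t] modulo [M],
   the map [t^k m ↦ k mod d] on [<t> M] lifts, [F] being free, to a homomorphism
   [θ : <t> M → Z] (built from a Schreier cocycle), and [L := θ^-1 (n d Z)] does
   the job, since [θ (y^n) = n θ y] and [θ y ≡ 1 mod d] for [y ∈ t M]. *)

From Stdlib Require Import List Arith Lia ZArith Setoid Morphisms.
From Stdlib Require Import Classical ClassicalEpsilon FunctionalExtensionality PropExtensionality.
Import ListNotations.

Local Notation "x ** y" := (gmul x y) (at level 40, left associativity).

Section Groups.
Variable A : group.
Implicit Types x y z a b : A.

Lemma mulgV x : x ** ginv x = gone.
Proof.
  transitivity (ginv (ginv x) ** ginv x ** (x ** ginv x)).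
  - now rewrite gmulV, gmul1.
  - now rewrite <- gmulA, (gmulA A (ginv x) x), gmulV, gmul1, gmulV.
Qed.

Lemma mulg1 x : x ** gone = x.
Proof. now rewrite <- (gmulV A x), gmulA, mulgV, gmul1. Qed.

Lemma mulKg x y : ginv x ** (x ** y) = y.
Proof. now rewrite gmulA, gmulV, gmul1. Qed.

Lemma mulKVg x y : x ** (ginv x ** y) = y.
Proof. now rewrite gmulA, mulgV, gmul1. Qed.

Lemma mulgK x y : y ** x ** ginv x = y.
Proof. now rewrite <- gmulA, mulgV, mulg1. Qed.

Lemma mulgKV x y : y ** ginv x ** x = y.
Proof. now rewrite <- gmulA, gmulV, mulg1. Qed.

Lemma invg_unique x y : x ** y = gone -> y = ginv x.
Proof. intros E. now rewrite <- (mulKg x y), E, mulg1. Qed.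

Lemma invgK x : ginv (ginv x) = x.
Proof. symmetry. apply invg_unique, gmulV. Qed.

Lemma invMg x y : ginv (x ** y) = ginv y ** ginv x.
Proof. symmetry. apply invg_unique. now rewrite gmulA, <- (gmulA A x), mulgV, mulg1, mulgV. Qed.

Lemma invg1 : ginv (@gone A) = gone.
Proof. symmetry. apply invg_unique, gmul1. Qed.

End Groups.

Ltac gsimpl :=
  repeat progress rewrite ?invMg, ?invgK, ?invg1, <- ?gmulA, ?mulKg, ?mulKVg,
    ?gmulV, ?mulgV, ?gmul1, ?mulg1.

Ltac group_identity := gsimpl; reflexivity.

Section Subgroups.
Variable A : group.
Implicit Types x y z a b : A.

Lemma conjg_eq1 a x : a ** x ** ginv a = gone -> x = gone.
Proof.
  intros E. replace x with (ginv a ** (a ** x ** ginv a) ** a) by group_identity.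
  rewrite E. group_identity.
Qed.

Lemma subgroup_invK (H : A -> Prop) x : is_subgroup A H -> H (ginv x) -> H x.
Proof. intros (_ & _ & Hinv) Hx. rewrite <- (invgK A x). auto. Qed.

Lemma subgroup_coset_iff (H : A -> Prop) x y :
  is_subgroup A H -> H (ginv x ** y) -> (H x <-> H y).
Proof.
  intros (_ & Hmul & Hinv) Hxy. split; intros Hx.
  - rewrite <- (mulKVg A x y). auto.
  - replace x with (y ** ginv (ginv x ** y)) by group_identity. auto.
Qed.

Lemma subgroup_inter (H1 H2 : A -> Prop) :
  is_subgroup A H1 -> is_subgroup A H2 -> is_subgroup A (fun a => H1 a /\ H2 a).
Proof. intros (? & ? & ?) (? & ? & ?). repeat split; intuition. Qed.

Lemma subgroup_gpow (H : A -> Prop) x k : is_subgroup A H -> H x -> H (gpow A x k).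
Proof. intros (H1 & Hmul & _) Hx. induction k; simpl; auto. Qed.

Lemma gpowD x m k : gpow A x (m + k) = gpow A x m ** gpow A x k.
Proof. induction m as [|m IH]; simpl. now rewrite gmul1. now rewrite IH, gmulA. Qed.

Lemma gpowM x m k : gpow A x (m * k) = gpow A (gpow A x m) k.
Proof.
  induction k as [|k IH]; simpl. now rewrite Nat.mul_0_r.
  now rewrite <- IH, <- gpowD, Nat.mul_succ_r, Nat.add_comm.
Qed.

Lemma gpow1 x : gpow A x 1 = x.
Proof. apply mulg1. Qed.

Lemma gpow_conj a x k : gpow A (a ** x ** ginv a) k = a ** gpow A x k ** ginv a.
Proof.
  induction k as [|k IH]; simpl. now rewrite mulg1, mulgV.
  rewrite IH. group_identity.
Qed.

Lemma normal_gpow_congr (N : A -> Prop) x y k :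
  is_normal_subgroup A N -> N (ginv x ** y) -> N (ginv (gpow A x k) ** gpow A y k).
Proof.
  intros [(N1 & Nmul & _) Nconj] Nxy. induction k as [|k IH]; simpl.
  - now rewrite invg1, gmul1.
  - replace (ginv (x ** gpow A x k) ** (y ** gpow A y k))
      with (ginv (gpow A x k) ** (ginv x ** y) ** ginv (ginv (gpow A x k))
            ** (ginv (gpow A x k) ** gpow A y k)) by group_identity.
    auto.
Qed.

End Subgroups.

Section Words.
Variable A : group.
Implicit Types x y z a b : A.
Notation word := (list (bool * A)).
Implicit Types u v w : word.

Definition letter_val (l : bool * A) : A := if fst l then snd l else ginv (snd l).
Definition letter_inv (l : bool * A) : bool * A := (negb (fst l), snd l).
Definition winv w : word := rev (map letter_inv w).

Lemma letter_val_inv l : letter_val (letter_inv l) = ginv (letter_val l).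
Proof. destruct l as [[] x]; unfold letter_val; simpl; auto using invgK. Qed.

Lemma eval_cons l w : eval_word A (l :: w) = letter_val l ** eval_word A w.
Proof. now destruct l. Qed.

Lemma eval_app u v : eval_word A (u ++ v) = eval_word A u ** eval_word A v.
Proof.
  induction u as [|l u IH]; simpl. now rewrite gmul1.
  destruct l. now rewrite IH, gmulA.
Qed.

Lemma eval_cancel u l v :
  eval_word A (u ++ l :: letter_inv l :: v) = eval_word A (u ++ v).
Proof. rewrite !eval_app, !eval_cons, letter_val_inv. group_identity. Qed.

Lemma eval_winv w : eval_word A (winv w) = ginv (eval_word A w).
Proof.
  induction w as [|l w IH]; unfold winv in *. simpl. now rewrite invg1.
  cbn [map rev]. rewrite eval_app, IH, !eval_cons, letter_val_inv. simpl. group_identity.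
Qed.

Lemma word_over_app (X : A -> Prop) u v :
  word_over A X (u ++ v) <-> word_over A X u /\ word_over A X v.
Proof. unfold word_over. now rewrite Forall_app. Qed.

Lemma word_over_winv (X : A -> Prop) w : word_over A X w -> word_over A X (winv w).
Proof.
  intros Hw. apply Forall_rev, Forall_map. eapply Forall_impl; [|exact Hw]. auto.
Qed.

Lemma reduced_cons2 l l' w :
  reduced A (l :: l' :: w) <-> l' <> letter_inv l /\ reduced A (l' :: w).
Proof.
  destruct l as [b x], l' as [b' x']; unfold letter_inv; simpl.
  split; intros [Hne Hw]; split; auto; intros E.
  - injection E as -> ->. apply Hne. split; [reflexivity|]. now destruct b.
  - destruct E as [-> Hb]. apply Hne. destruct b, b'; simpl; congruence.
Qed.

Lemma reduced_tail l w : reduced A (l :: w) -> reduced A w.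
Proof. destruct l, w as [|[] w]; simpl; tauto. Qed.

Lemma reduced_app_l u v : reduced A (u ++ v) -> reduced A u.
Proof.
  induction u as [|l [|l' u] IH]; cbn [app].
  - intros _. exact I.
  - destruct l; simpl; tauto.
  - rewrite !reduced_cons2. intros [? ?]; auto.
Qed.

Lemma reduced_glue u l v :
  reduced A (u ++ [l]) -> reduced A (l :: v) -> reduced A (u ++ l :: v).
Proof.
  induction u as [|l1 [|l2 u] IH]; cbn [app]; [auto| |].
  - rewrite !reduced_cons2. tauto.
  - rewrite !reduced_cons2. intros [? ?] ?; auto.
Qed.

Lemma not_reduced_split w :
  ~ reduced A w -> exists u l v, w = u ++ l :: letter_inv l :: v.
Proof.
  induction w as [|l [|l' w] IH]; simpl; intros Hw.
  - tauto.
  - destruct l; simpl in Hw; tauto.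
  - destruct (classic (l' = letter_inv l)) as [->|Hne].
    + now exists [], l, w.
    + destruct IH as (u & l0 & v & ->).
      { intros Hr. apply Hw, reduced_cons2. auto. }
      now exists (l :: u), l0, v.
Qed.

Lemma word_reduce_invariant {B : Type} (f : word -> B) (X : A -> Prop) :
  (forall u l v, f (u ++ l :: letter_inv l :: v) = f (u ++ v)) ->
  forall w, word_over A X w ->
  exists w', word_over A X w' /\ reduced A w' /\ f w' = f w.
Proof.
  intros Hf w. remember (length w) as m eqn:Em. revert w Em.
  induction m as [m IH] using lt_wf_ind. intros w Em Hw.
  destruct (classic (reduced A w)) as [Hr|Hr]; [now exists w|].
  destruct (not_reduced_split w Hr) as (u & l & v & ->).
  apply word_over_app in Hw as [Hu Hlv]. inversion Hlv as [|? ? _ Hv]. inversion Hv.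
  destruct (IH (length (u ++ v))) with (w := u ++ v) as (w' & Hw' & Hr' & Hfw').
  - subst m. rewrite !length_app. simpl. lia.
  - reflexivity.
  - apply word_over_app. auto.
  - exists w'. rewrite Hf. auto.
Qed.

Fixpoint wpow w n : word := match n with 0 => [] | S k => w ++ wpow w k end.

Lemma eval_wpow w n : eval_word A (wpow w n) = gpow A (eval_word A w) n.
Proof. induction n as [|n IH]; simpl; auto. now rewrite eval_app, IH. Qed.

Lemma word_over_wpow (X : A -> Prop) w n : word_over A X w -> word_over A X (wpow w n).
Proof. intros Hw. induction n; simpl. constructor. now apply word_over_app. Qed.

(* [lz] is the last letter of [l :: c]; the hypotheses say that [l :: c] is
   cyclically reduced. *)
Lemma reduced_wpow l c u lz n :
  reduced A (l :: c) -> l :: c = u ++ [lz] -> l <> letter_inv lz ->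
  reduced A (wpow (l :: c) (S n)).
Proof.
  intros Hr Ec Hcyc. induction n as [|n IH].
  - simpl. now rewrite app_nil_r.
  - change (reduced A ((l :: c) ++ l :: c ++ wpow (l :: c) n)).
    apply reduced_glue; [|exact IH].
    rewrite Ec, <- app_assoc. apply reduced_glue; [now rewrite <- Ec|].
    apply reduced_cons2. split; [|now destruct l]. intros E. apply Hcyc.
    rewrite E. now destruct lz as [[] ?].
Qed.

Lemma free_torsion_free (F X : A -> Prop) :
  freely_generated A F X -> forall y n, F y -> 0 < n -> gpow A y n = gone -> y = gone.
Proof.
  intros [HF Hfree] y n Fy Hn Hyn.
  apply HF in Fy as (w0 & Hw0 & <-).
  destruct (word_reduce_invariant (eval_word A) X eval_cancel w0 Hw0) as (w & Hw & Hr & Ew).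
  rewrite <- Ew in *. clear w0 Hw0 Ew.
  remember (length w) as m eqn:Em. revert w Em Hw Hr Hyn.
  induction m as [m IH] using lt_wf_ind. intros w Em Hw Hr Hwn.
  destruct w as [|l c]; [reflexivity|].
  destruct (exists_last (l := l :: c)) as (u & lz & Ec); [discriminate|].
  destruct (classic (l = letter_inv lz)) as [->|Hcyc].
  - destruct u as [|l' v]; simpl in Ec; injection Ec as El Ec.
    { destruct lz as [[] ?]; cbv in El; congruence. }
    subst l' c.
    assert (Ew : eval_word A (letter_inv lz :: v ++ [lz])
                 = ginv (letter_val lz) ** eval_word A v ** ginv (ginv (letter_val lz))).
    { rewrite eval_cons, eval_app, eval_cons, letter_val_inv. cbn [eval_word].
      group_identity. }
    rewrite Ew in Hwn |- *. rewrite gpow_conj in Hwn.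
    rewrite (IH (length v)) with (w := v); [group_identity| | reflexivity | | |].
    + subst m. simpl. rewrite length_app. simpl. lia.
    + now apply Forall_inv_tail, word_over_app in Hw as [? _].
    + eapply reduced_app_l, reduced_tail; eauto.
    + eapply conjg_eq1; eauto.
  - exfalso. destruct n as [|n]; [lia|].
    apply (Hfree (wpow (l :: c) (S n))).
    + now apply word_over_wpow.
    + eapply reduced_wpow; eauto.
    + discriminate.
    + now rewrite eval_wpow.
Qed.

End Words.

Section FreeActions.
Variables (A : group) (F X : A -> Prop) (T : Type) (act : bool * A -> T -> T).
Hypothesis Xfree : freely_generated A F X.
Hypothesis act_inv : forall l p, act (letter_inv A l) (act l p) = p.

Definition word_act (w : list (bool * A)) (p : T) : T := fold_left (fun q l => act l q) w p.

Lemma word_act_cons l w p : word_act (l :: w) p = word_act w (act l p).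
Proof. reflexivity. Qed.

Lemma word_act_app u v p : word_act (u ++ v) p = word_act v (word_act u p).
Proof. apply fold_left_app. Qed.

Lemma word_act_trivial u p :
  word_over A X u -> eval_word A u = gone -> word_act u p = p.
Proof.
  intros Hu Hu1.
  destruct (word_reduce_invariant A (fun w => (eval_word A w, word_act w p)) X)
    with (w := u) as (w & Hw & Hr & Ew); auto.
  { intros u' l v. f_equal; [apply eval_cancel|].
    rewrite !word_act_app. simpl. now rewrite act_inv. }
  injection Ew as Ew1 Ew2. rewrite <- Ew2.
  destruct w as [|l w]; [reflexivity|].
  exfalso. apply (proj2 Xfree (l :: w)); congruence.
Qed.

(* The universal property of a free group, in the form of actions: assigning a
   permutation of T to each generator yields a well defined action of F. *)
Lemma word_act_wd u v p :
  word_over A X u -> word_over A X v -> eval_word A u = eval_word A v ->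
  word_act u p = word_act v p.
Proof.
  intros Hu Hv Euv.
  assert (Hv' := word_over_winv A X v Hv).
  transitivity (word_act ((u ++ winv A v) ++ v) p).
  - rewrite <- app_assoc, word_act_app, (word_act_trivial (winv A v ++ v)); auto.
    + apply word_over_app; auto.
    + now rewrite eval_app, eval_winv, gmulV.
  - rewrite word_act_app, (word_act_trivial (u ++ winv A v)); auto.
    + apply word_over_app; auto.
    + now rewrite eval_app, eval_winv, Euv, mulgV.
Qed.

End FreeActions.

Section FiniteIndex.
Variable A : group.
Implicit Types x y z a b : A.

Lemma finite_index_in_mono (K H H' : A -> Prop) :
  finite_index_in A K H -> (forall y, H y -> H' y) -> finite_index_in A K H'.
Proof.
  intros [l Hl] HH'. exists l. intros x Kx.
  destruct (Hl x Kx) as (t & ? & ? & ?). eauto.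
Qed.

Lemma finite_index_in_self (F : A -> Prop) : is_subgroup A F -> finite_index_in A F F.
Proof.
  intros (F1 & _ & _). exists [gone]. intros x Fx. exists gone.
  rewrite invg1, gmul1. simpl. auto.
Qed.

Lemma finite_index_in_trans (F K L : A -> Prop) :
  is_subgroup A F -> (forall y, K y -> F y) ->
  finite_index_in A F K -> finite_index_in A K L -> finite_index_in A F L.
Proof.
  intros (_ & Fmul & _) KF [l1 Hl1] [l2 Hl2].
  exists (flat_map (fun t => map (gmul t) l2) l1). intros x Fx.
  destruct (Hl1 x Fx) as (t & Ht & Ft & Kx).
  destruct (Hl2 _ Kx) as (s & Hs & Ks & Lx).
  exists (t ** s). repeat split; auto.
  - apply in_flat_map. exists t. split; auto. now apply in_map.
  - now rewrite invMg, <- gmulA.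
Qed.

Lemma finite_index_in_restrict (H N : A -> Prop) :
  is_subgroup A H -> is_subgroup A N -> finite_index A N ->
  finite_index_in A H (fun a => H a /\ N a).
Proof.
  intros (_ & Hmul & Hinv) (_ & Nmul & Ninv) [l Hl].
  set (pick t := epsilon (inhabits (@gone A)) (fun u => H u /\ N (ginv t ** u))).
  exists (map pick l). intros x Hx.
  destruct (Hl x I) as (t & Ht & _ & Nx).
  assert (Hpick : H (pick t) /\ N (ginv t ** pick t)).
  { apply (epsilon_spec (inhabits gone) (fun u => H u /\ N (ginv t ** u))). eauto. }
  destruct Hpick as [Hp Np].
  exists (pick t). repeat split; auto using in_map.
  replace (ginv (pick t) ** x) with (ginv (ginv t ** pick t) ** (ginv t ** x)) by group_identity.
  auto.
Qed.

Lemma finite_index_inter (N1 N2 : A -> Prop) :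
  is_subgroup A N1 -> is_subgroup A N2 -> finite_index A N1 -> finite_index A N2 ->
  finite_index A (fun a => N1 a /\ N2 a).
Proof.
  intros HN1 HN2 FN1 FN2.
  apply (finite_index_in_trans _ N1); auto.
  - repeat split; auto.
  - now apply finite_index_in_restrict.
Qed.

Lemma normal_subgroup_inter (N1 N2 : A -> Prop) :
  is_normal_subgroup A N1 -> is_normal_subgroup A N2 ->
  is_normal_subgroup A (fun a => N1 a /\ N2 a).
Proof.
  intros [HN1 N1conj] [HN2 N2conj]. split; [now apply subgroup_inter|].
  intros a n [? ?]. auto.
Qed.

Lemma normal_finite_index_total :
  is_normal_subgroup A (fun _ => True) /\ finite_index A (fun _ => True).
Proof. repeat split; auto. exists [gone]. intros x _. exists gone. simpl. auto. Qed.

Lemma normal_finite_index_refine {I : Type} (P : I -> (A -> Prop) -> Prop) (l : list I) :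
  (forall i (N N' : A -> Prop), (forall a, N' a -> N a) -> P i N -> P i N') ->
  (forall i, In i l -> exists N, is_normal_subgroup A N /\ finite_index A N /\ P i N) ->
  exists N, is_normal_subgroup A N /\ finite_index A N /\ forall i, In i l -> P i N.
Proof.
  intros Pmono. induction l as [|i l IH]; intros Hl.
  - exists (fun _ => True). split; [|split]; try apply normal_finite_index_total.
    intros i [].
  - destruct (Hl i (in_eq i l)) as (N1 & HN1 & FN1 & PN1).
    destruct IH as (N2 & HN2 & FN2 & PN2); [intros; apply Hl; now right|].
    exists (fun a => N1 a /\ N2 a). split; [|split].
    + now apply normal_subgroup_inter.
    + apply finite_index_inter; auto; [apply HN1 | apply HN2].
    + intros j [<-|Hj]; eapply Pmono; eauto; now intros a [? ?].
Qed.

End FiniteIndex.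

Definition zcong (m a b : Z) : Prop := (m | a - b)%Z.
Local Notation "a ≡ b [mod m ]" := (zcong m a b)
  (at level 70, b at next level, format "a  ≡  b  [mod  m ]").

#[local] Instance zcong_equiv m : Equivalence (zcong m).
Proof.
  split; unfold zcong.
  - intros a. replace (a - a)%Z with 0%Z by ring. apply Z.divide_0_r.
  - intros a b H. replace (b - a)%Z with (- (a - b))%Z by ring. now apply Z.divide_opp_r.
  - intros a b c H1 H2. replace (a - c)%Z with (a - b + (b - c))%Z by ring.
    now apply Z.divide_add_r.
Qed.

#[local] Instance zcong_add m : Proper (zcong m ==> zcong m ==> zcong m) Z.add.
Proof.
  intros a a' Ha b b' Hb. unfold zcong in *.
  replace (a + b - (a' + b'))%Z with (a - a' + (b - b'))%Z by ring. now apply Z.divide_add_r.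
Qed.

#[local] Instance zcong_opp m : Proper (zcong m ==> zcong m) Z.opp.
Proof.
  intros a a' Ha. unfold zcong in *.
  replace (- a - - a')%Z with (- (a - a'))%Z by ring. now apply Z.divide_opp_r.
Qed.

Lemma zcong_eq m a b : a = b -> a ≡ b [mod m].
Proof. intros ->. reflexivity. Qed.

Lemma zcong_mod m a b : (0 < m)%Z -> (a mod m = b mod m)%Z -> a ≡ b [mod m].
Proof.
  intros Hm E. rewrite !Z.mod_eq in E by lia. exists (a / m - b / m)%Z. nia.
Qed.

Section AdditiveMaps.
Variables (A : group) (K : A -> Prop).
Hypothesis K_subgroup : is_subgroup A K.
Implicit Types x y z a b : A.

Definition additive_on (theta : A -> Z) : Prop :=
  forall y z, K y -> K z -> theta (y ** z) = (theta y + theta z)%Z.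

Variable theta : A -> Z.
Hypothesis theta_add : additive_on theta.

Lemma additive_on_one : theta gone = 0%Z.
Proof.
  destruct K_subgroup as (K1 & _ & _).
  assert (E := theta_add gone gone K1 K1). rewrite gmul1 in E. lia.
Qed.

Lemma additive_on_inv y : K y -> theta (ginv y) = (- theta y)%Z.
Proof.
  destruct K_subgroup as (_ & _ & Kinv). intros Ky.
  assert (E := theta_add y (ginv y) Ky (Kinv y Ky)).
  rewrite mulgV, additive_on_one in E. lia.
Qed.

Lemma additive_on_gpow y k : K y -> theta (gpow A y k) = (Z.of_nat k * theta y)%Z.
Proof.
  intros Ky. induction k as [|k IH]; simpl gpow.
  - now rewrite additive_on_one.
  - rewrite theta_add, IH, Nat2Z.inj_succ; [ring | exact Ky |].
    now apply subgroup_gpow.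
Qed.

Definition kernel_mod (m : Z) (y : A) : Prop := K y /\ theta y ≡ 0 [mod m].

Lemma kernel_mod_subgroup m : is_subgroup A (kernel_mod m).
Proof.
  destruct K_subgroup as (K1 & Kmul & Kinv).
  split; [|split]; unfold kernel_mod.
  - now rewrite additive_on_one.
  - intros y z [Ky Hy] [Kz Hz]. split; auto. now rewrite theta_add, Hy, Hz.
  - intros y [Ky Hy]. split; auto. now rewrite additive_on_inv, Hy.
Qed.

Lemma kernel_mod_finite_index m : (0 < m)%Z -> finite_index_in A K (kernel_mod m).
Proof.
  destruct K_subgroup as (_ & Kmul & Kinv). intros Hm.
  set (pick j := epsilon (inhabits (@gone A)) (fun s => K s /\ (theta s mod m = j)%Z)).
  exists (map pick (map Z.of_nat (seq 0 (Z.to_nat m)))). intros y Ky.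
  set (j := (theta y mod m)%Z).
  assert (Hj := Z.mod_pos_bound (theta y) m Hm).
  assert (Hpick : K (pick j) /\ (theta (pick j) mod m = j)%Z).
  { apply (epsilon_spec (inhabits gone) (fun s => K s /\ (theta s mod m = j)%Z)). eauto. }
  destruct Hpick as [Kp Hp].
  exists (pick j). repeat split; auto.
  - apply in_map, in_map_iff. exists (Z.to_nat j). rewrite in_seq. split; lia.
  - rewrite theta_add, additive_on_inv by auto.
    rewrite (zcong_mod m (theta (pick j)) (theta y)) by auto.
    apply zcong_eq. ring.
Qed.

End AdditiveMaps.

Section SchreierLift.
Variables (A : group) (F X K : A -> Prop) (d : Z) (phi : A -> Z) (r : A -> A).
Hypothesis Xfree : freely_generated A F X.
Hypothesis K_subgroup : is_subgroup A K.
Hypothesis KF : forall y, K y -> F y.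
Hypothesis phi_mul : forall y z, K y -> K z -> phi (y ** z) ≡ phi y + phi z [mod d].
Hypothesis r_coset : forall a, K (a ** ginv (r a)).
Hypothesis r_canon : forall a b, K (a ** ginv b) -> r a = r b.
Implicit Types x y z a b : A.

Lemma phi_one : phi gone ≡ 0 [mod d].
Proof.
  destruct K_subgroup as (K1 & _ & _).
  assert (E := phi_mul gone gone K1 K1). rewrite gmul1 in E.
  replace (phi gone) with (phi gone + phi gone + - phi gone)%Z at 1 by ring.
  rewrite <- E. apply zcong_eq. ring.
Qed.

Lemma phi_inv y : K y -> phi (ginv y) ≡ - phi y [mod d].
Proof.
  destruct K_subgroup as (_ & _ & Kinv). intros Ky.
  replace (phi (ginv y)) with (phi y + phi (ginv y) + - phi y)%Z by ring.
  rewrite <- phi_mul, mulgV, phi_one by auto. apply zcong_eq. ring.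
Qed.

Definition schreier a y : A := r a ** y ** ginv (r (a ** y)).

Lemma schreier_in a y : K (schreier a y).
Proof.
  destruct K_subgroup as (_ & Kmul & Kinv).
  replace (schreier a y) with (ginv (a ** ginv (r a)) ** (a ** y ** ginv (r (a ** y))))
    by (unfold schreier; group_identity).
  auto.
Qed.

Lemma schreier_mul a y z : schreier a (y ** z) = schreier a y ** schreier (a ** y) z.
Proof. unfold schreier. rewrite gmulA. group_identity. Qed.

Lemma schreier_inv a y : schreier a (ginv y) = ginv (schreier (a ** ginv y) y).
Proof. unfold schreier. rewrite mulgKV. group_identity. Qed.

Lemma schreier_coset a b y : K (a ** ginv b) -> schreier a y = schreier b y.
Proof.
  intros Kab. unfold schreier. rewrite (r_canon a b), (r_canon (a ** y) (b ** y)); auto.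
  replace (a ** y ** ginv (b ** y)) with (a ** ginv b) by group_identity. exact Kab.
Qed.

(* The second coordinate of [cocycle_act] accumulates the [phi]-values of the
   Schreier elements met along a word; freeness of [F] makes the result depend
   only on the value of the word. *)
Definition letter_cocycle a (l : bool * A) : Z :=
  if fst l then phi (schreier a (snd l))
  else (- phi (schreier (a ** ginv (snd l)) (snd l)))%Z.

Definition cocycle_act (l : bool * A) (p : A * Z) : A * Z :=
  (fst p ** letter_val A l, (snd p + letter_cocycle (fst p) l)%Z).

Lemma cocycle_act_inv l p : cocycle_act (letter_inv A l) (cocycle_act l p) = p.
Proof.
  destruct l as [[] s], p as [a k]; unfold cocycle_act, letter_cocycle, letter_val; simpl;
    rewrite ?mulgK, ?mulgKV; f_equal; ring.
Qed.

Definition theta_at a (w : list (bool * A)) : Z := snd (word_act A _ cocycle_act w (a, 0%Z)).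

Lemma word_act_cocycle a k w :
  word_act A _ cocycle_act w (a, k) = (a ** eval_word A w, (k + theta_at a w)%Z).
Proof.
  unfold theta_at. revert a k. induction w as [|l w IH]; intros a k.
  - simpl. now rewrite mulg1, Z.add_0_r.
  - rewrite !word_act_cons. unfold cocycle_act. cbn [fst snd].
    rewrite (IH _ (k + _)%Z), (IH _ (0 + _)%Z), eval_cons, gmulA. cbn [snd].
    f_equal. ring.
Qed.

Lemma theta_at_cons a l w :
  theta_at a (l :: w) = (letter_cocycle a l + theta_at (a ** letter_val A l) w)%Z.
Proof.
  unfold theta_at at 1. rewrite word_act_cons. unfold cocycle_act at 2. cbn [fst snd].
  rewrite word_act_cocycle. cbn [snd]. ring.
Qed.

Lemma theta_at_app a u v :
  theta_at a (u ++ v) = (theta_at a u + theta_at (a ** eval_word A u) v)%Z.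
Proof.
  unfold theta_at at 1. rewrite word_act_app, !word_act_cocycle. simpl. ring.
Qed.

Lemma theta_at_coset a b w : K (a ** ginv b) -> theta_at a w = theta_at b w.
Proof.
  revert a b. induction w as [|l w IH]; intros a b Kab; [reflexivity|].
  rewrite !theta_at_cons. f_equal.
  - destruct l as [[] s]; unfold letter_cocycle; simpl.
    + now rewrite (schreier_coset a b).
    + rewrite (schreier_coset (a ** ginv s) (b ** ginv s)); auto.
      replace (a ** ginv s ** ginv (b ** ginv s)) with (a ** ginv b) by group_identity.
      exact Kab.
  - apply IH. replace (a ** letter_val A l ** ginv (b ** letter_val A l))
      with (a ** ginv b) by group_identity. exact Kab.
Qed.

Lemma letter_cocycle_congr a l :
  letter_cocycle a l ≡ phi (schreier a (letter_val A l)) [mod d].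
Proof.
  destruct l as [[] s]; unfold letter_cocycle, letter_val; simpl; [reflexivity|].
  rewrite schreier_inv, phi_inv by apply schreier_in. reflexivity.
Qed.

Lemma theta_at_congr a w : theta_at a w ≡ phi (schreier a (eval_word A w)) [mod d].
Proof.
  revert a. induction w as [|l w IH]; intros a.
  - unfold schreier. simpl. rewrite !mulg1, mulgV, phi_one. reflexivity.
  - rewrite theta_at_cons, eval_cons, schreier_mul, phi_mul by apply schreier_in.
    now rewrite letter_cocycle_congr, IH.
Qed.

Definition word_of y : list (bool * A) :=
  epsilon (inhabits []) (fun w => word_over A X w /\ eval_word A w = y).

Lemma word_of_spec y : F y -> word_over A X (word_of y) /\ eval_word A (word_of y) = y.
Proof.
  intros Fy. apply (epsilon_spec (inhabits []) (fun w => word_over A X w /\ eval_word A w = y)).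
  now apply (proj1 Xfree).
Qed.

Definition schreier_lift y : Z := theta_at gone (word_of y).

Lemma schreier_lift_word y w :
  word_over A X w -> eval_word A w = y -> schreier_lift y = theta_at gone w.
Proof.
  intros Hw <-. destruct (word_of_spec (eval_word A w)) as [Hw' Ew'].
  { apply (proj1 Xfree). eauto. }
  unfold schreier_lift, theta_at. f_equal.
  apply (word_act_wd A F X); auto using cocycle_act_inv.
Qed.

Lemma schreier_lift_additive : additive_on A K schreier_lift.
Proof.
  destruct K_subgroup as (_ & Kmul & _). intros y z Ky Kz.
  destruct (word_of_spec y (KF y Ky)) as [Hy Ey].
  destruct (word_of_spec z (KF z Kz)) as [Hz Ez].
  rewrite (schreier_lift_word (y ** z) (word_of y ++ word_of z)).
  - rewrite theta_at_app, Ey, (theta_at_coset (gone ** y) gone); [reflexivity|].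
    now rewrite gmul1, invg1, mulg1.
  - now apply word_over_app.
  - now rewrite eval_app, Ey, Ez.
Qed.

Lemma schreier_lift_congr y : K y -> schreier_lift y ≡ phi y [mod d].
Proof.
  destruct K_subgroup as (_ & Kmul & Kinv). intros Ky.
  assert (Kr : K (r gone)).
  { apply (subgroup_invK A K); auto. rewrite <- (gmul1 A (ginv _)). apply r_coset. }
  destruct (word_of_spec y (KF y Ky)) as [Hy Ey].
  unfold schreier_lift. rewrite theta_at_congr, Ey. unfold schreier.
  rewrite (r_canon (gone ** y) gone) by (now rewrite gmul1, invg1, mulg1).
  rewrite !phi_mul, phi_inv by auto. apply zcong_eq. ring.
Qed.

End SchreierLift.

Lemma transversal_exists (A : group) (K : A -> Prop) :
  is_subgroup A K ->
  exists r : A -> A, (forall a, K (a ** ginv (r a))) /\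
                     (forall a b, K (a ** ginv b) -> r a = r b).
Proof.
  intros (K1 & Kmul & Kinv).
  exists (fun a => epsilon (inhabits gone) (fun b => K (a ** ginv b))). split.
  - intros a. apply (epsilon_spec (inhabits gone) (fun b => K (a ** ginv b))).
    exists a. now rewrite mulgV.
  - intros a b Kab. f_equal. apply functional_extensionality. intros c.
    apply propositional_extensionality. split; intros Kc.
    + replace (b ** ginv c) with (ginv (a ** ginv b) ** (a ** ginv c)) by group_identity. auto.
    + replace (a ** ginv c) with (a ** ginv b ** (b ** ginv c)) by group_identity. auto.
Qed.

Lemma free_additive_lift (A : group) (F X K : A -> Prop) (d : Z) (phi : A -> Z) :
  freely_generated A F X -> is_subgroup A K -> (forall y, K y -> F y) ->
  (forall y z, K y -> K z -> phi (y ** z) ≡ phi y + phi z [mod d]) ->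
  exists theta, additive_on A K theta /\ forall y, K y -> theta y ≡ phi y [mod d].
Proof.
  intros Xfree HK KF phi_mul.
  destruct (transversal_exists A K HK) as (r & r_coset & r_canon).
  exists (schreier_lift A X phi r). split.
  - eapply schreier_lift_additive; eauto.
  - eapply schreier_lift_congr; eauto.
Qed.

Lemma subgroup_pow_order (A : group) (M : A -> Prop) (x : A) (n : nat) :
  is_subgroup A M -> ~ M x -> 0 < n -> M (gpow A x n) ->
  exists d, 2 <= d /\ M (gpow A x d) /\ forall k, M (gpow A x k) -> Nat.divide d k.
Proof.
  intros HM Mx Hn Mxn.
  destruct (dec_inh_nat_subset_has_unique_least_element (fun k => 0 < k /\ M (gpow A x k)))
    as (d & [[Hd Mxd] dmin] & _); [intros k; apply classic | eauto |].
  exists d. split; [|split; auto].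
  { destruct (Nat.eq_dec d 1) as [->|]; [|lia]. now rewrite gpow1 in Mxd. }
  intros k Mxk. apply Nat.Lcm0.mod_divide.
  destruct (Nat.eq_dec (k mod d) 0) as [|Hr]; auto. exfalso.
  assert (Mxr : M (gpow A x (k mod d))).
  { rewrite (Nat.div_mod_eq k d), gpowD, gpowM in Mxk.
    pose proof HM as (_ & Mmul & Minv).
    rewrite <- (mulKg A (gpow A (gpow A x d) (k / d)) (gpow A x (k mod d))).
    apply Mmul; auto. apply Minv, subgroup_gpow; auto. }
  assert (Hle := dmin (k mod d) (conj (proj1 (Nat.neq_0_lt_0 _) Hr) Mxr)).
  assert (Hlt := Nat.mod_upper_bound k d ltac:(lia)). lia.
Qed.

Section CyclicExtension.
Variables (A : group) (F M : A -> Prop) (x : A) (d : nat).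
Hypothesis F_subgroup : is_subgroup A F.
Hypothesis M_subgroup : is_subgroup A M.
Hypothesis MF : forall m, M m -> F m.
Hypothesis M_normal : forall c m, F c -> M m -> M (c ** m ** ginv c).
Hypothesis Fx : F x.
Hypothesis d_pos : 0 < d.
Hypothesis Mxd : M (gpow A x d).
Hypothesis Mx_order : forall k, M (gpow A x k) -> Nat.divide d k.
Implicit Types y z : A.

Definition pow_coset y (k : nat) : Prop := M (ginv (gpow A x k) ** y).

Definition cyclic_ext y : Prop := exists k, pow_coset y k.

Lemma pow_coset_F y k : pow_coset y k -> F y.
Proof.
  destruct F_subgroup as (_ & Fmul & _). intros Hy.
  replace y with (gpow A x k ** (ginv (gpow A x k) ** y)) by group_identity.
  apply Fmul; auto. now apply subgroup_gpow.
Qed.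

Lemma pow_coset_of_M m : M m -> pow_coset m 0.
Proof. intros Mm. unfold pow_coset. simpl. now rewrite invg1, gmul1. Qed.

Lemma pow_coset_mul y z k j : pow_coset y k -> pow_coset z j -> pow_coset (y ** z) (k + j).
Proof.
  destruct M_subgroup as (_ & Mmul & _). unfold pow_coset. intros Hy Hz. rewrite gpowD.
  replace (ginv (gpow A x k ** gpow A x j) ** (y ** z)) with
    (ginv (gpow A x j) ** (ginv (gpow A x k) ** y) ** ginv (ginv (gpow A x j))
     ** (ginv (gpow A x j) ** z)) by group_identity.
  apply Mmul; auto. apply M_normal; auto.
  destruct F_subgroup as (_ & _ & Finv). now apply Finv, subgroup_gpow.
Qed.

Lemma pow_coset_inv y k : pow_coset y k -> pow_coset (ginv y) (k * (d - 1)).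
Proof.
  destruct M_subgroup as (_ & Mmul & Minv). unfold pow_coset. intros Hy.
  assert (Mkd : M (ginv (gpow A x k ** gpow A x (k * (d - 1))))).
  { apply Minv. rewrite <- gpowD.
    replace (k + k * (d - 1)) with (d * k) by (destruct d; lia).
    rewrite gpowM. now apply subgroup_gpow. }
  replace (ginv (gpow A x (k * (d - 1))) ** ginv y) with
    (ginv (gpow A x (k * (d - 1))) ** ginv (ginv (gpow A x k) ** y)
       ** ginv (ginv (gpow A x (k * (d - 1))))
     ** ginv (gpow A x k ** gpow A x (k * (d - 1)))) by group_identity.
  apply Mmul; auto. apply M_normal; auto.
  destruct F_subgroup as (_ & _ & Finv). now apply Finv, subgroup_gpow.
Qed.

Lemma pow_coset_unique y k k' :
  pow_coset y k -> pow_coset y k' -> Z.of_nat k ≡ Z.of_nat k' [mod Z.of_nat d].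
Proof.
  destruct M_subgroup as (_ & Mmul & Minv).
  assert (Hle : forall k j, pow_coset y k -> pow_coset y (k + j) ->
                Z.of_nat k ≡ Z.of_nat (k + j) [mod Z.of_nat d]).
  { clear k k'. unfold pow_coset. intros k j Hk Hjk.
    assert (Mx : M (gpow A x j)).
    { replace (gpow A x j) with (ginv (gpow A x k) ** y ** ginv (ginv (gpow A x (k + j)) ** y))
        by (rewrite gpowD; group_identity).
      auto. }
    destruct (Mx_order _ Mx) as [q ->]. exists (- Z.of_nat q)%Z.
    rewrite Nat2Z.inj_add, Nat2Z.inj_mul. ring. }
  intros Hk Hk'. destruct (Nat.le_ge_cases k k') as [H|H];
    apply Nat.le_exists_sub in H as (j & -> & _); rewrite Nat.add_comm in *; auto.
  symmetry. auto.
Qed.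

Lemma cyclic_ext_subgroup : is_subgroup A cyclic_ext.
Proof.
  destruct M_subgroup as (M1 & _ & _). split; [|split].
  - exists 0. now apply pow_coset_of_M.
  - intros y z [k Hy] [j Hz]. exists (k + j). now apply pow_coset_mul.
  - intros y [k Hy]. exists (k * (d - 1)). now apply pow_coset_inv.
Qed.

Lemma cyclic_ext_F y : cyclic_ext y -> F y.
Proof. intros [k Hy]. eapply pow_coset_F; eauto. Qed.

Definition pow_level y : Z := Z.of_nat (epsilon (inhabits 0) (pow_coset y)).

Lemma pow_level_spec y k : pow_coset y k -> pow_level y ≡ Z.of_nat k [mod Z.of_nat d].
Proof.
  intros Hy. apply (pow_coset_unique y); auto.
  apply (epsilon_spec (inhabits 0) (pow_coset y)). eauto.
Qed.

Lemma pow_level_mul y z :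
  cyclic_ext y -> cyclic_ext z ->
  pow_level (y ** z) ≡ pow_level y + pow_level z [mod Z.of_nat d].
Proof.
  intros [k Hy] [j Hz].
  rewrite (pow_level_spec (y ** z) (k + j)), (pow_level_spec y k), (pow_level_spec z j)
    by auto using pow_coset_mul.
  apply zcong_eq. lia.
Qed.

End CyclicExtension.

Lemma power_coset_avoidance (A : group) (F X M : A -> Prop) (x : A) (n : nat) :
  freely_generated A F X -> is_subgroup A F -> is_subgroup A M ->
  (forall m, M m -> F m) -> (forall c m, F c -> M m -> M (c ** m ** ginv c)) ->
  finite_index_in A F M -> F x -> ~ M x -> 0 < n -> M (gpow A x n) ->
  exists L, is_subgroup A L /\ (forall y, L y -> F y) /\ finite_index_in A F L /\
    forall y, M (ginv x ** y) -> ~ L (gpow A y n).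
Proof.
  intros Xfree HF HM MF M_normal FM Fx Mx Hn Mxn.
  destruct (subgroup_pow_order A M x n HM Mx Hn Mxn) as (d & Hd & Mxd & Mx_order).
  set (K := cyclic_ext A M x).
  assert (HK : is_subgroup A K) by (apply (cyclic_ext_subgroup A F M x d); auto; lia).
  assert (KF : forall y, K y -> F y) by (intros; eapply cyclic_ext_F; eauto).
  destruct (free_additive_lift A F X K (Z.of_nat d) (pow_level A M x)) as (theta & Htheta & Hcongr);
    auto.
  { intros y z Ky Kz. apply (pow_level_mul A F M x d); auto. lia. }
  exists (kernel_mod A K theta (Z.of_nat (n * d))). split; [|split; [|split]].
  - now apply kernel_mod_subgroup.
  - intros y [Ky _]. auto.
  - apply (finite_index_in_trans A F K); auto.
    + apply (finite_index_in_mono A F M); auto.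
      intros m Mm. exists 0. now apply pow_coset_of_M.
    + apply kernel_mod_finite_index; auto. lia.
  - intros y Hy [_ Hyn].
    assert (Ky1 : pow_coset A M x y 1) by (unfold pow_coset; now rewrite gpow1).
    assert (Ky : K y) by (exists 1; exact Ky1).
    assert (Hy1 : theta y ≡ 1 [mod Z.of_nat d]).
    { rewrite Hcongr by auto. now apply (pow_level_spec A M x d HM Mx_order y 1). }
    unfold zcong in Hyn. rewrite (additive_on_gpow A K), Z.sub_0_r, Nat2Z.inj_mul in Hyn by auto.
    apply Z.mul_divide_cancel_l in Hyn; [|lia].
    assert (H1 : (Z.of_nat d | 1)%Z).
    { replace 1%Z with (theta y - (theta y - 1))%Z by ring. now apply Z.divide_sub_r. }
    apply Z.divide_pos_le in H1; lia.
Qed.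

Lemma separable_avoid_normal (A : group) (S : A -> Prop) (g : A) :
  S gone -> separable A S -> ~ S g ->
  exists N, is_normal_subgroup A N /\ finite_index A N /\ ~ N g.
Proof.
  intros S1 Ssep Sg. destruct (Ssep g Sg) as (N & HN & FN & Ng).
  exists N. split; [|split]; auto. intros Ng'. apply (Ng (ginv g)).
  - now apply HN.
  - now rewrite mulgV.
Qed.

Lemma separable_normal_core (A : group) (F L : A -> Prop) :
  is_subgroup A L -> finite_index_in A F L -> separable A L ->
  exists N, is_normal_subgroup A N /\ finite_index A N /\ forall y, F y -> N y -> L y.
Proof.
  intros HL [R HR] Lsep.
  destruct (normal_finite_index_refine A
              (fun t N => ~ L t -> forall y, N y -> ~ L (ginv t ** y)) R)
    as (N & HN & FN & NR).
  - intros t N N' HN'N Ht Lt y Ny. eauto.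
  - intros t _. destruct (classic (L t)) as [Lt|Lt].
    + exists (fun _ => True). split; [|split]; try apply normal_finite_index_total. tauto.
    + destruct (Lsep (ginv t)) as (N & HN & FN & Nt).
      { intros Lt'. apply Lt, (subgroup_invK A L); auto. }
      exists N. auto.
  - exists N. split; [|split]; auto. intros y Fy Ny.
    destruct (HR y Fy) as (t & Ht & _ & Lty).
    destruct (classic (L t)) as [Lt|Lt].
    + now apply (subgroup_coset_iff A L t y).
    + exfalso. exact (NR t Ht Lt y Ny Lty).
Qed.

Lemma normal_conj_gpow (A : group) (N : A -> Prop) (g a f : A) (n : nat) :
  is_normal_subgroup A N -> gpow A g n = gone ->
  N (ginv g ** (a ** f ** ginv a)) -> N (gpow A f n).
Proof.
  intros HN gn Ngf. pose proof HN as [_ Nconj].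
  apply (normal_gpow_congr A N _ _ n) in Ngf; auto.
  rewrite gn, invg1, gmul1, gpow_conj in Ngf.
  replace (gpow A f n) with (ginv a ** (a ** gpow A f n ** ginv a) ** ginv (ginv a))
    by group_identity.
  auto.
Qed.

Lemma coset_power_separation (A : group) (F X M : A -> Prop) (t : A) (n : nat) :
  freely_generated A F X -> is_subgroup A F -> is_subgroup A M ->
  (forall m, M m -> F m) -> (forall c m, F c -> M m -> M (c ** m ** ginv c)) ->
  finite_index_in A F M -> 0 < n ->
  (forall H, is_subgroup A H -> (forall x, H x -> F x) -> finite_index_in A F H -> separable A H) ->
  exists N, is_normal_subgroup A N /\ finite_index A N /\
    (F t -> ~ M t -> M (gpow A t n) -> forall y, M (ginv t ** y) -> ~ N (gpow A y n)).
Proof.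
  intros Xfree HF HM MF M_normal FM Hn Hsep.
  destruct (classic (F t /\ ~ M t /\ M (gpow A t n))) as [(Ft & Mt & Mtn)|Ht].
  - destruct (power_coset_avoidance A F X M t n) as (L & HL & LF & FL & Lt); auto.
    destruct (separable_normal_core A F L HL FL (Hsep L HL LF FL)) as (N & HN & FN & NL).
    exists N. split; [|split]; auto. intros _ _ _ y My Nyn. apply (Lt y My), NL; auto.
    apply subgroup_gpow; auto. apply (subgroup_coset_iff A F t y); auto.
  - exists (fun _ => True). split; [|split]; try apply normal_finite_index_total. tauto.
Qed.

Theorem lemma3p5 (A : group) (F : A -> Prop) (g : A) :
  is_free_subgroup A F ->
  g <> gone ->
  finite_order A g ->
  (forall H : A -> Prop, is_subgroup A H -> (forall x, H x -> F x) ->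
     finite_index_in A F H -> separable A H) ->
  exists N : A -> Prop,
    is_normal_subgroup A N /\ finite_index A N /\
    (* psi(g) is not in psi(F)^{A/N}: g N <> a f a^-1 N for all a in A, f in F *)
    forall a f, F f -> ~ N (gmul (ginv g) (gmul (gmul a f) (ginv a))).
Proof.
  intros [HF [X Xfree]] g1 [n [Hn gn]] Hsep.
  assert (Fg : ~ F g) by (intros Fg; exact (g1 (free_torsion_free A F X Xfree g n Fg Hn gn))).
  destruct (separable_avoid_normal A F g (proj1 HF)
              (Hsep F HF (fun _ Fx => Fx) (finite_index_in_self A F HF)) Fg)
    as (N1 & HN1 & FN1 & N1g).
  set (M a := F a /\ N1 a).
  assert (HM : is_subgroup A M) by (apply subgroup_inter; [exact HF | apply HN1]).
  assert (FM : finite_index_in A F M) by (apply finite_index_in_restrict; auto; apply HN1).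
  pose proof FM as [R HR].
  destruct (normal_finite_index_refine A (fun t N => F t -> ~ M t -> M (gpow A t n) ->
              forall y, M (ginv t ** y) -> ~ N (gpow A y n)) R) as (N2 & HN2 & FN2 & N2R).
  { intros t N N' N'N HN Ft Mt Mtn y My N'y. exact (HN Ft Mt Mtn y My (N'N _ N'y)). }
  { intros t _. apply (coset_power_separation A F X M); auto.
    - now intros m [Fm _].
    - intros c m Fc [Fm N1m]. split; [|now apply HN1].
      destruct HF as (_ & Fmul & Finv). auto. }
  exists (fun a => N1 a /\ N2 a). split; [|split].
  - now apply normal_subgroup_inter.
  - apply finite_index_inter; auto; [apply HN1 | apply HN2].
  - intros a f Ff [N1gf N2gf].
    destruct (HR f Ff) as (t & Ht & Ft & Mtf).
    apply (N2R t Ht Ft) with (y := f); auto.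
    + intros Mt. apply N1g. apply (subgroup_coset_iff A N1 g _ (proj1 HN1) N1gf).
      apply HN1. now apply (subgroup_coset_iff A M t f).
    + split; [now apply subgroup_gpow|].
      apply (subgroup_coset_iff A N1 _ _ (proj1 HN1)
               (normal_gpow_congr A N1 t f n HN1 (proj2 Mtf))).
      now apply (normal_conj_gpow A N1 g a f n).
    + now apply (normal_conj_gpow A N2 g a f n).
Qed.
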